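(* Let $\Sigma_1$ and $\Sigma_2$ be connected graphs (multiple edges allowed, no loops) with $n$ vertices each containing exactly one cycle. If $\Sigma_1^*\cong\Sigma_2^*$, then $\Sigma_1\cong\Sigma_2$.
   Context: A cycle may consist of two vertices joined by two parallel edges. For such a graph $\Sigma$, the dual graph $\Sigma^*$ has as vertices the edges of $\Sigma$; two vertices are joined by an edge if the corresponding edges have a common endpoint, except that if two edges of $\Sigma$ form a cycle (i.e., are parallel edges), the corresponding vertices of $\Sigma^*$ are joined by a dotted edge (a distinguished edge type). Isomorphisms of dual graphs preserve the edge types. *)

From mathcomp Require Import all_boot.
Set Implicit Arguments. Unset Strict Implicit. Unset Printing Implicit Defensive.

(* Parallel edges are distinct elements of E with the same endpoints. *)

Section Graphs.
Variables (V E : finType) (ends : E -> {set V}).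

Definition loopless : Prop := forall e, #|ends e| = 2.

Definition adj_in (S : {set E}) : rel V :=
  fun u v => [exists e in S, [&& u \in ends e, v \in ends e & u != v]].

Definition connected_graph : Prop :=
  forall u v : V, connect (adj_in setT) u v.

Definition touches (S : {set E}) (v : V) : bool := [exists e in S, v \in ends e].

(* C is (the edge set of) a cycle: nonempty, 2-regular on its vertices,
   and connected.  Two parallel edges form a cycle of length 2. *)
Definition is_cycle (C : {set E}) : Prop :=
  [/\ C != set0,
      (forall v, touches C v -> #|[set e in C | v \in ends e]| = 2) &
      (forall u v, touches C u -> touches C v -> connect (adj_in C) u v)].

Definition unicyclic : Prop := exists! C : {set E}, is_cycle C.

End Graphs.

(* Edge types of the dual graph Sigma^* (vertices = edges of Sigma). *)
Inductive dual_edge := NoEdge | Plain | Dotted.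

Definition dual_label (V E : finType) (ends : E -> {set V}) (e f : E) : dual_edge :=
  if e == f then NoEdge
  else if ends e == ends f then Dotted            (* parallel edges: a 2-cycle *)
  else if [exists v, (v \in ends e) && (v \in ends f)] then Plain
  else NoEdge.

Definition dual_iso (V1 E1 V2 E2 : finType)
    (ends1 : E1 -> {set V1}) (ends2 : E2 -> {set V2}) : Prop :=
  exists phi : E1 -> E2, bijective phi /\
    forall e f, dual_label ends2 (phi e) (phi f) = dual_label ends1 e f.

Definition graph_iso (V1 E1 V2 E2 : finType)
    (ends1 : E1 -> {set V1}) (ends2 : E2 -> {set V2}) : Prop :=
  exists (fV : V1 -> V2) (fE : E1 -> E2),
    [/\ bijective fV, bijective fE & forall e, ends2 (fE e) = fV @: ends1 e].

From mathcomp Require Import all_boot fingroup perm.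
Set Implicit Arguments. Unset Strict Implicit. Unset Printing Implicit Defensive.

(* Whitney's argument for line graphs, adapted to dotted edges.  A dual
   isomorphism [phi] preserves parallelism and adjacency of edges.  Suppose
   first that it also preserves, for distinct edges e, f, g, the property of
   having a common end.  A vertex v meeting two non-parallel edges is then sent
   to the unique common end of their images, which lies on the image of every
   edge at v; a vertex whose edges are all parallel to one edge {v, u} is sent
   to the end of that edge's image not used by u.  For n >= 3 every edge has an
   end of the first kind, the vertex map is injective on every edge, and by
   counting it is an isomorphism inducing [phi].
   Otherwise some star e1, e2, e3 at v is sent to a triangle (or conversely).
   The triangle is the unique cycle of Sigma_2, so the image of any other edge
   meets it at most once; pulled back, every other edge joins two leaves of the
   star, and unicyclicity leaves room for only one such edge h0.  Both graphs are
   then paws, isomorphic through a map that exchanges the pendant edge with h0.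
   With two vertices every edge joins them and any bijection works. *)

Section SmallSets.
Variable T : finType.
Implicit Types (A B : {set T}) (a b x y : T).

Lemma card2_set2 A a b : #|A| = 2 -> a \in A -> b \in A -> a != b -> A = [set a; b].
Proof.
move=> cA aA bA ab; apply/esym/eqP; rewrite eqEcard cards2 ab cA leqnn andbT.
by apply/subsetP=> x; rewrite !inE => /orP[] /eqP ->.
Qed.

Lemma card2_other A a : #|A| = 2 -> a \in A -> exists2 b, b != a & A = [set a; b].
Proof.
move=> cA aA; have: 1 < #|A| by rewrite cA.
rewrite (cardsD1 a) aA ltnS card_gt0 => /set0Pn[b]; rewrite !inE => /andP[ba bA].
by exists b => //; apply: card2_set2; rewrite // eq_sym.
Qed.

Lemma card2_avoid A x : #|A| = 2 -> exists2 w, w \in A & w != x.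
Proof.
move=> cA; have /card_gt0P[a aA] : 0 < #|A| by rewrite cA.
have [b ba AE] := card2_other cA aA.
have [ax|] := eqVneq a x; last by exists a.
by exists b; rewrite ?AE ?inE ?eqxx ?orbT // -ax.
Qed.

Lemma card2_set2_neq a b : #|[set a; b]| = 2 -> a != b.
Proof. by rewrite cards2; case: (a != b). Qed.

Lemma set2_memF a b x : x != a -> x != b -> (x \in [set a; b]) = false.
Proof. by move=> xa xb; rewrite !inE (negbTE xa) (negbTE xb). Qed.

Lemma card2_meet_uniq A B x y : #|A| = 2 -> #|B| = 2 -> A != B ->
  x \in A -> x \in B -> y \in A -> y \in B -> x = y.
Proof.
move=> cA cB AB xA xB yA yB; apply/eqP/negP=> /negP xy.
by move: AB; rewrite (card2_set2 cA xA yA xy) (card2_set2 cB xB yB xy) eqxx.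
Qed.

Lemma set3_rot x y z : [set x; y; z] = [set y; z; x].
Proof. by apply/setP=> t; rewrite !inE; case: (t == x); case: (t == y); case: (t == z). Qed.

Lemma set3_swap x y z : [set x; y; z] = [set x; z; y].
Proof. by apply/setP=> t; rewrite !inE; case: (t == x); case: (t == y); case: (t == z). Qed.

Lemma set3_filter x y z (P : pred T) :
  P x -> ~~ P y -> P z -> [set t in [set x; y; z] | P t] = [set x; z].
Proof.
move=> Px Py Pz; apply/setP=> t; rewrite !inE.
have [->|ty] := eqVneq t y.
  by rewrite (negbTE Py) andbF; apply/esym/negP => /orP[]/eqP yE; move: Py; rewrite yE ?Px ?Pz.
rewrite orbF; have [->|tx] := eqVneq t x; first by rewrite Px.
by have [->|] := eqVneq t z; rewrite ?Pz.
Qed.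

End SmallSets.

Lemma imset_set2 (aT rT : finType) (f : aT -> rT) a b : f @: [set a; b] = [set f a; f b].
Proof. by rewrite imsetU1 imset_set1. Qed.

Lemma card_eq_bij (T1 T2 : finType) : #|T1| = #|T2| -> exists f : T1 -> T2, bijective f.
Proof.
move=> cT; exists (fun x => enum_val (cast_ord cT (enum_rank x))).
exists (fun y => enum_val (cast_ord (esym cT) (enum_rank y))) => [x|y] /=.
  by rewrite enum_valK cast_ordK enum_rankK.
by rewrite enum_valK cast_ordKV enum_rankK.
Qed.

Section Multigraph.
Variables (V E : finType) (ends : E -> {set V}).
Implicit Types (e f g : E) (u v w : V) (S C : {set E}).

Definition edge_adj e f := [exists v, (v \in ends e) && (v \in ends f)].

Definition common_end e f g := [exists v, [&& v \in ends e, v \in ends f & v \in ends g]].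

Definition branching v :=
  [exists e, exists f, [&& v \in ends e, v \in ends f & ends e != ends f]].

Lemma edge_adjP e f : reflect (exists2 v, v \in ends e & v \in ends f) (edge_adj e f).
Proof. by apply: (iffP existsP) => [[v /andP[]]|[v ve vf]]; exists v => //; rewrite ve. Qed.

Lemma common_endP e f g :
  reflect (exists v, [/\ v \in ends e, v \in ends f & v \in ends g]) (common_end e f g).
Proof. by apply: (iffP existsP) => -[v /and3P H]; exists v. Qed.

Lemma branchingP v :
  reflect (exists e f, [/\ v \in ends e, v \in ends f & ends e != ends f]) (branching v).
Proof.
apply: (iffP existsP) => [[e /existsP[f /and3P[]]]|[e [f [ve vf ef]]]]; first by exists e, f.
by exists e; apply/existsP; exists f; rewrite ve vf.
Qed.

Lemma adjP S u v :
  reflect (exists e, [/\ e \in S, u \in ends e, v \in ends e & u != v]) (adj_in ends S u v).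
Proof. by apply: (iffP existsP) => -[e /and4P H]; exists e. Qed.

Lemma touchesP S v : reflect (exists2 e, e \in S & v \in ends e) (touches ends S v).
Proof. by apply: (iffP existsP) => [[e /andP[]]|[e eS ve]]; exists e; rewrite ?eS. Qed.

Lemma adj_sym S : symmetric (adj_in ends S).
Proof.
by move=> u v; apply/adjP/adjP=> -[e [eS ue ve uv]]; exists e; rewrite eq_sym.
Qed.

Lemma edge_adj_set2 e f a b :
  ends f = [set a; b] -> edge_adj e f = (a \in ends e) || (b \in ends e).
Proof.
move=> fE; apply/edge_adjP/orP => [[w we]|[ae|be]].
- by rewrite fE !inE => /orP[]/eqP <-; [left|right].
- by exists a; rewrite // fE !inE eqxx.
- by exists b; rewrite // fE !inE eqxx orbT.
Qed.

Section Connected.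
Hypothesis K : connected_graph ends.

Lemma connected_closed (X : {set V}) x0 : x0 \in X ->
  (forall e u w, u \in X -> u \in ends e -> w \in ends e -> w \in X) -> X = setT.
Proof.
move=> x0X clX; apply/setP=> w; rewrite inE.
have cX : closed (adj_in ends setT) (mem X).
  move=> u v /adjP[e [_ ue ve _]].
  by apply/idP/idP => [uX|vX]; [exact: clX uX ue ve | exact: clX vX ve ue].
by rewrite -(closed_connect cX (K x0 w)).
Qed.

Lemma vertex_on_edge v : 1 < #|V| -> exists e, v \in ends e.
Proof.
move=> V2; have [/existsP//|/existsPn noE] := boolP [exists e, v \in ends e].
have closed_v : [set v] = setT.
  by apply: (connected_closed (set11 v)) => e u w /set1P-> ve; have := noE e; rewrite ve.
by move: V2; rewrite -cardsT -closed_v cards1.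
Qed.

End Connected.

Section Loopless.
Hypothesis L : loopless ends.

Lemma loopless_neq e a b : ends e = [set a; b] -> a != b.
Proof. by move=> eE; apply: card2_set2_neq; rewrite -eE L. Qed.

Lemma loopless_card_gt1 e : 1 < #|V|.
Proof. by rewrite -(L e) max_card. Qed.

Lemma ends_setT e : #|V| = 2 -> ends e = setT.
Proof. by move=> cV; apply/eqP; rewrite eqEcard subsetT cardsT cV L. Qed.

Lemma edge_adj_parallel e f : ends e = ends f -> edge_adj e f.
Proof.
move=> Eef; have /card_gt0P[v ve] : 0 < #|ends e| by rewrite L.
by apply/edge_adjP; exists v; rewrite -?Eef.
Qed.

Lemma cycle_connect_hub C a :
  (forall u, touches ends C u -> u = a \/ adj_in ends C a u) ->
  forall u v, touches ends C u -> touches ends C v -> connect (adj_in ends C) u v.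
Proof.
move=> hub u v tu tv.
have from_a w : touches ends C w -> connect (adj_in ends C) a w.
  by move=> /hub[-> | ?]; [exact: connect0 | exact: connect1].
apply: (@connect_trans _ _ a); last exact: from_a.
by rewrite (sym_connect_sym (@adj_sym C)); exact: from_a.
Qed.

Lemma parallel_cycle e f : e != f -> ends e = ends f -> is_cycle ends [set e; f].
Proof.
move=> ef Eef; have /card_gt0P[a ae] : 0 < #|ends e| by rewrite L.
have [b ba eE] := card2_other (L e) ae.
have in_e u : touches ends [set e; f] u -> u \in ends e.
  by case/touchesP=> g; rewrite !inE => /orP[]/eqP->; rewrite ?Eef.
split.
- by apply/set0Pn; exists e; rewrite !inE eqxx.
- move=> u /in_e ue; suff -> : [set g in [set e; f] | u \in ends g] = [set e; f].
    by rewrite cards2 ef.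
  by apply/setP=> g; rewrite !inE; case: eqP => [->|_]; case: eqP => [->|_]; rewrite -?Eef.
- apply: (@cycle_connect_hub _ a) => u /in_e; rewrite eE !inE => /orP[]/eqP->; [by left|right].
  by apply/adjP; exists e; rewrite eE !inE !eqxx orbT; split => //; rewrite eq_sym.
Qed.

Lemma triangle_degree e f g a b c :
  ends e = [set a; b] -> ends f = [set b; c] -> ends g = [set c; a] ->
  #|[set h in [set e; f; g] | a \in ends h]| = 2.
Proof.
move=> eE fE gE.
have [[ab bc] ca] := (loopless_neq eE, loopless_neq fE, loopless_neq gE).
have eg : e != g.
  apply: contraTneq (_ : b \in ends e) => [->|]; last by rewrite eE !inE eqxx orbT.
  by rewrite gE !inE negb_or bc eq_sym ab.
rewrite set3_filter ?cards2 ?eg // ?eE ?gE ?inE ?eqxx ?orbT // fE !inE negb_or ab.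
by rewrite eq_sym ca.
Qed.

Lemma triangle_cycle e f g a b c :
  ends e = [set a; b] -> ends f = [set b; c] -> ends g = [set c; a] ->
  is_cycle ends [set e; f; g].
Proof.
move=> eE fE gE.
have in_abc u : touches ends [set e; f; g] u -> [|| u == a, u == b | u == c].
  case/touchesP=> h; rewrite !inE => /orP[/orP[]|] /eqP->; rewrite ?eE ?fE ?gE !inE;
  by case/orP=> ->; rewrite ?orbT.
split.
- by apply/set0Pn; exists e; rewrite !inE eqxx.
- move=> u /in_abc /or3P[]/eqP->; first exact: triangle_degree eE fE gE.
    by rewrite set3_rot; exact: triangle_degree fE gE eE.
  by rewrite -set3_rot; exact: triangle_degree gE eE fE.
- apply: (@cycle_connect_hub _ a) => u /in_abc /or3P[]/eqP->; [by left|right|right].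
    by apply/adjP; exists e; rewrite eE !inE !eqxx orbT (loopless_neq eE); split.
  apply/adjP; exists g; rewrite gE !inE !eqxx !orbT; split=> //.
  by rewrite eq_sym (loopless_neq gE).
Qed.

Lemma cycle_other_edge C e x : is_cycle ends C -> e \in C -> x \in ends e ->
  exists2 g, g \in C & (g != e) && (x \in ends g).
Proof.
case=> _ deg _ eC xe; have tx : touches ends C x by apply/touchesP; exists e.
have [g] := card2_avoid e (deg x tx).
by rewrite inE => /andP[gC xg] ge; exists g; rewrite ?ge.
Qed.

Section Unicyclic.
Hypothesis U : unicyclic ends.

Lemma unicyclic_eq C1 C2 : is_cycle ends C1 -> is_cycle ends C2 -> C1 = C2.
Proof. by case: U => C0 [_ uniqC] /uniqC <- /uniqC <-. Qed.

Lemma cycle_parallel_in C x g : is_cycle ends C -> x \in C -> ends g = ends x -> g \in C.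
Proof.
move=> cC xC Egx; have [-> //|gx] := eqVneq g x.
have /card_gt0P[u ux] : 0 < #|ends x| by rewrite L.
have [y yC /andP[yx _]] := cycle_other_edge cC xC ux.
have := unicyclic_eq (parallel_cycle gx Egx) cC => /setP/(_ y).
by rewrite yC !inE (negbTE yx) orbF => /eqP <-.
Qed.

End Unicyclic.
End Loopless.
End Multigraph.

Section GraphIso.
Variables (V1 E1 V2 E2 : finType) (ends1 : E1 -> {set V1}) (ends2 : E2 -> {set V2}).

Lemma graph_iso_sym : graph_iso ends2 ends1 -> graph_iso ends1 ends2.
Proof.
case=> fV [fE [[gV fVK gVK] [gE fEK gEK] fE_ends]].
exists gV, gE; split; [exact: (Bijective gVK fVK) | exact: (Bijective gEK fEK) |].
move=> e; have := fE_ends (gE e); rewrite gEK => ->.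
by rewrite -imset_comp (eq_imset _ fVK) imset_id.
Qed.

Hypotheses (L1 : loopless ends1) (L2 : loopless ends2).
Hypothesis cardV : #|V1| = #|V2|.
Variable phi : E1 -> E2.
Hypothesis phi_bij : bijective phi.

Lemma iso_two_vertices : #|V1| = 2 -> graph_iso ends1 ends2.
Proof.
move=> cV1; have [fV fV_bij] := card_eq_bij cardV.
exists fV, phi; split=> // e; rewrite (ends_setT L1 _ cV1) (ends_setT L2 _) -?cardV //.
apply/esym/eqP; rewrite eqEcard subsetT card_imset ?cardsT ?cardV ?leqnn //.
exact: bij_inj.
Qed.

Definition respects_incidence (fV : V1 -> V2) :=
  forall v e, v \in ends1 e -> fV v \in ends2 (phi e).

Lemma iso_of_vertex_map fV :
  (forall w, exists e, w \in ends2 e) -> respects_incidence fV ->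
  (forall e, {in ends1 e &, injective fV}) -> graph_iso ends1 ends2.
Proof.
move=> cover2 fV_inc fV_inj.
have fV_ends e : ends2 (phi e) = fV @: ends1 e.
  have /card_gt0P[a ae] : 0 < #|ends1 e| by rewrite L1.
  have [b ba eE] := card2_other (L1 e) ae; have be : b \in ends1 e by rewrite eE !inE eqxx orbT.
  rewrite eE imset_set2; apply: card2_set2; rewrite ?fV_inc //.
  by apply: contra_neq ba => fab; exact: (fV_inj e b a be ae (esym fab)).
have fV_onto : fV @: setT = setT.
  apply/setP => w; rewrite inE; have [e we] := cover2 w.
  have [psi phiK psiK] := phi_bij; rewrite -(psiK e) fV_ends in we.
  by case/imsetP: we => x _ ->; apply: imset_f; rewrite inE.
have /imset_injP fV_injT : #|fV @: setT| == #|[set: V1]| by rewrite fV_onto !cardsT cardV.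
exists fV, phi; split=> //; apply: inj_card_bij; last by rewrite cardV.
by move=> x y; apply: fV_injT; rewrite inE.
Qed.

End GraphIso.

Section DualIso.
Variables (V1 E1 V2 E2 : finType) (ends1 : E1 -> {set V1}) (ends2 : E2 -> {set V2}).
Hypotheses (L1 : loopless ends1) (L2 : loopless ends2).
Variable phi : E1 -> E2.
Hypothesis phi_bij : bijective phi.
Hypothesis phi_label : forall e f, dual_label ends2 (phi e) (phi f) = dual_label ends1 e f.

Let phi_inj : injective phi := bij_inj phi_bij.

Lemma dual_parallel e f : e != f -> (ends2 (phi e) == ends2 (phi f)) = (ends1 e == ends1 f).
Proof.
move=> ef; have := phi_label e f; rewrite /dual_label (inj_eq phi_inj) (negbTE ef).
by do 2 case: (_ == _); do ?case: ifP.
Qed.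

Lemma dual_parallel_eq e f : ends1 e = ends1 f -> ends2 (phi e) = ends2 (phi f).
Proof.
by move=> Eef; have [->|ef] := eqVneq e f; last by apply/eqP; rewrite dual_parallel // Eef.
Qed.

Lemma dual_edge_adj e f : e != f -> edge_adj ends2 (phi e) (phi f) = edge_adj ends1 e f.
Proof.
move=> ef; have [E2ef|ne2] := eqVneq (ends2 (phi e)) (ends2 (phi f)).
  have /eqP E1ef : ends1 e == ends1 f by rewrite -dual_parallel // E2ef.
  by rewrite (edge_adj_parallel L2 E2ef) (edge_adj_parallel L1 E1ef).
have := phi_label e f; rewrite /dual_label (inj_eq phi_inj) (negbTE ef) (negbTE ne2).
rewrite -dual_parallel // (negbTE ne2) -!/(edge_adj _ _ _).
by do 2 case: edge_adj.
Qed.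

Lemma dual_adj_set2 e f a b x y : e != f ->
  ends1 f = [set a; b] -> ends2 (phi f) = [set x; y] ->
  (x \in ends2 (phi e)) || (y \in ends2 (phi e)) = (a \in ends1 e) || (b \in ends1 e).
Proof. by move=> ef fE fX; rewrite -(edge_adj_set2 _ fX) -(edge_adj_set2 _ fE) dual_edge_adj. Qed.

Section StarPreserving.
Hypotheses (K1 : connected_graph ends1) (K2 : connected_graph ends2).
Hypothesis cardV : #|V1| = #|V2|.
Hypothesis V1_gt2 : 2 < #|V1|.
Hypothesis phi_common_end : forall e f g, e != f -> f != g -> e != g ->
  common_end ends2 (phi e) (phi f) (phi g) = common_end ends1 e f g.

Lemma branching_image v : branching ends1 v ->
  exists w, forall g, v \in ends1 g -> w \in ends2 (phi g).
Proof.
case/branchingP=> e [f [ve vf Def]]; have ef : e != f by apply: contraNneq Def => ->.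
have /edge_adjP[w we wf] : edge_adj ends2 (phi e) (phi f).
  by rewrite dual_edge_adj //; apply/edge_adjP; exists v.
exists w => g vg; have [->|ge] := eqVneq g e; first by [].
have [->|gf] := eqVneq g f; first by [].
have /common_endP[w' [w'e w'f w'g]] : common_end ends2 (phi e) (phi f) (phi g).
  rewrite phi_common_end 1?[f == g]eq_sym 1?[e == g]eq_sym //.
  by apply/common_endP; exists v.
have Dpef : ends2 (phi e) != ends2 (phi f) by rewrite dual_parallel.
by rewrite (card2_meet_uniq (L2 _) (L2 _) Dpef we wf w'e w'f).
Qed.

Lemma nonbranching_parallel v e g : ~~ branching ends1 v ->
  v \in ends1 e -> v \in ends1 g -> ends1 g = ends1 e.
Proof.
move=> nBv ve vg; apply/eqP; apply: contraNT nBv => Dge.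
by apply/branchingP; exists g, e.
Qed.

Lemma edge_branching_end e a b : ends1 e = [set a; b] -> branching ends1 a || branching ends1 b.
Proof.
move=> eE; apply: contraLR V1_gt2; rewrite negb_or -leqNgt => /andP[nBa nBb].
rewrite -cardsT; suff <- : [set a; b] = setT by rewrite cards2; case: (a != b).
apply: (connected_closed K1 (set21 a b)) => h u w /set2P[]-> uh wh;
  by rewrite -eE -(nonbranching_parallel _ _ uh) // eE !inE eqxx ?orbT.
Qed.

Lemma branching_ends_separated fV e a b : respects_incidence ends1 ends2 phi fV ->
  ends1 e = [set a; b] -> a != b -> branching ends1 a -> branching ends1 b -> fV a != fV b.
Proof.
move=> fV_inc eE ab Ba Bb; apply/eqP => fab.
have off_e x : branching ends1 x -> exists f, x \in ends1 f /\ ends1 f != ends1 e.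
  case/branchingP=> f1 [f2 [xf1 xf2 D12]].
  have [E1e|] := eqVneq (ends1 f1) (ends1 e); last by exists f1.
  by exists f2; rewrite -E1e eq_sym.
have [[f [af fe]] [g [bg ge]]] := (off_e a Ba, off_e b Bb).
have [ae be] : a \in ends1 e /\ b \in ends1 e by rewrite eE !inE !eqxx orbT.
have bNf : b \notin ends1 f by apply: contra fe => bf; rewrite (card2_set2 (L1 f) af bf ab) eE.
have aNg : a \notin ends1 g by apply: contra ge => ag; rewrite (card2_set2 (L1 g) ag bg ab) eE.
have ef : e != f by apply: contraNneq fe => ->.
have eg : e != g by apply: contraNneq ge => ->.
have fg : f != g by apply: contraNneq bNf => ->.
have /common_endP[t [te tf tg]] : common_end ends1 e f g.
  rewrite -phi_common_end //; apply/common_endP; exists (fV a).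
  by split; [exact: fV_inc | exact: fV_inc | rewrite fab; exact: fV_inc].
by move: te; rewrite eE !inE => /orP[]/eqP tE; [move: aNg | move: bNf]; rewrite -tE ?tg ?tf.
Qed.

Lemma nonbranching_image (f1 : V1 -> V2) v : ~~ branching ends1 v -> exists w,
  (forall g, v \in ends1 g -> w \in ends2 (phi g)) /\
  (forall g u, v \in ends1 g -> u \in ends1 g -> u != v -> w != f1 u).
Proof.
move=> nBv; have [e0 ve0] := vertex_on_edge K1 v (ltnW V1_gt2).
have [u uv e0E] := card2_other (L1 e0) ve0.
have [w we0 wu] := card2_avoid (f1 u) (L2 (phi e0)).
exists w; split=> [g vg | g u' vg u'g u'v].
  by rewrite (dual_parallel_eq (nonbranching_parallel nBv ve0 vg)).
move: u'g; rewrite (nonbranching_parallel nBv ve0 vg) e0E !inE (negbTE u'v).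
by move/eqP->.
Qed.

Lemma branching_map_exists : exists f1 : V1 -> V2,
  forall v, branching ends1 v -> forall g, v \in ends1 g -> f1 v \in ends2 (phi g).
Proof.
have /card_gt0P[w0 _] : 0 < #|V2| by rewrite -cardV ltnW // ltnW.
suff /fin_all_exists[f1 f1_inc] : forall v, exists w : V2,
    branching ends1 v -> forall g, v \in ends1 g -> w \in ends2 (phi g) by exists f1.
by move=> v; have [/branching_image[w wP]|_] := boolP (branching ends1 v); [exists w | exists w0].
Qed.

Lemma vertex_map_exists : exists fV : V1 -> V2,
  respects_incidence ends1 ends2 phi fV /\ forall e, {in ends1 e &, injective fV}.
Proof.
have [f1 f1_inc] := branching_map_exists.
have /fin_all_exists[fV fV_spec] : forall v, exists w : V2,
    [/\ forall g, v \in ends1 g -> w \in ends2 (phi g),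
        branching ends1 v -> w = f1 v &
        ~~ branching ends1 v -> forall g u, v \in ends1 g -> u \in ends1 g -> u != v -> w != f1 u].
  move=> v; have [Bv|nBv] := boolP (branching ends1 v).
    by exists (f1 v); split=> //; apply: f1_inc.
  by have [w [w_inc w_sep]] := nonbranching_image f1 nBv; exists w.
have fV_inc : respects_incidence ends1 ends2 phi fV.
  by move=> v g; case: (fV_spec v) => + _ _; apply.
have sep e a b : ends1 e = [set a; b] -> a != b -> fV a != fV b.
  wlog Ba : a b / branching ends1 a => [sep_wlog eE ab | eE ab].
    have /orP[Ba|Bb] := edge_branching_end eE; first exact: sep_wlog.
    by rewrite eq_sym; apply: sep_wlog; rewrite 1?eq_sym 1?setUC.
  have [Bb|nBb] := boolP (branching ends1 b).
    exact: branching_ends_separated fV_inc eE ab Ba Bb.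
  case: (fV_spec a) => _ /(_ Ba) -> _; case: (fV_spec b) => _ _ /(_ nBb e a) sep_b.
  by rewrite eq_sym sep_b // eE !inE eqxx ?orbT // eq_sym.
exists fV; split=> // e a b ae be fab; have [//|ab] := eqVneq a b.
by move: (sep e a b (card2_set2 (L1 e) ae be ab) ab); rewrite fab eqxx.
Qed.

Lemma star_preserving_iso : graph_iso ends1 ends2.
Proof.
have [fV [fV_inc fV_inj]] := vertex_map_exists.
apply: (iso_of_vertex_map L1 L2 cardV phi_bij _ fV_inc fV_inj) => w.
by apply: (vertex_on_edge K2); rewrite -cardV ltnW.
Qed.

End StarPreserving.
End DualIso.

Section StarToTriangle.
Variables (V1 E1 V2 E2 : finType) (ends1 : E1 -> {set V1}) (ends2 : E2 -> {set V2}).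
Hypotheses (L1 : loopless ends1) (L2 : loopless ends2) (K1 : connected_graph ends1).
Hypotheses (U1 : unicyclic ends1) (U2 : unicyclic ends2).
Hypothesis cardV : #|V1| = #|V2|.
Variable phi : E1 -> E2.
Hypothesis phi_bij : bijective phi.
Hypothesis phi_label : forall e f, dual_label ends2 (phi e) (phi f) = dual_label ends1 e f.

Let phi_inj : injective phi := bij_inj phi_bij.

Section Paw.
Variables (e1 e2 e3 : E1) (v a1 a2 a3 : V1) (p q r : V2).
Hypotheses (E1v : ends1 e1 = [set v; a1]) (E2v : ends1 e2 = [set v; a2])
  (E3v : ends1 e3 = [set v; a3]).
Hypotheses (a12 : a1 != a2) (a13 : a1 != a3) (a23 : a2 != a3).
Hypotheses (X1 : ends2 (phi e1) = [set q; r]) (X2 : ends2 (phi e2) = [set p; r])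
  (X3 : ends2 (phi e3) = [set p; q]).

Local Notation star := [set e1; e2; e3].

Lemma star_center_neq : [/\ v != a1, v != a2 & v != a3].
Proof. by rewrite (loopless_neq L1 E1v) (loopless_neq L1 E2v) (loopless_neq L1 E3v). Qed.

Lemma star_leaves_neq : [/\ a1 != v, a2 != v & a3 != v].
Proof. by rewrite !(eq_sym _ v); apply: star_center_neq. Qed.

Lemma triangle_neq : [/\ p != q, q != r & p != r].
Proof. by rewrite (loopless_neq L2 X3) (loopless_neq L2 X1) (loopless_neq L2 X2). Qed.

Lemma image_star_cycle : is_cycle ends2 (phi @: star).
Proof.
by rewrite imsetU imsetU1 !imset_set1; apply: (triangle_cycle L2 X1 _ X3); rewrite X2 setUC.
Qed.

Lemma outer_image_not_parallel h x : h \notin star -> x \in star ->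
  ends2 (phi h) != ends2 (phi x).
Proof.
move=> hout xS; apply: contraNneq hout => Ehx.
by rewrite -(mem_imset _ _ phi_inj) (cycle_parallel_in L2 U2 image_star_cycle _ Ehx) ?imset_f.
Qed.

Lemma outer_edge_ends h : h \notin star -> v \notin ends1 h /\
  ([|| a1 \in ends1 h, a2 \in ends1 h | a3 \in ends1 h] ->
   [\/ ends1 h = [set a1; a2], ends1 h = [set a1; a3] | ends1 h = [set a2; a3]]).
Proof.
move=> hout.
suff [vNh pair] : v \notin ends1 h /\ ([|| a1 \in ends1 h, a2 \in ends1 h | a3 \in ends1 h] ->
    [|| (a1 \in ends1 h) && (a2 \in ends1 h), (a1 \in ends1 h) && (a3 \in ends1 h)
      | (a2 \in ends1 h) && (a3 \in ends1 h)]).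
  split=> // /pair /or3P[] /andP[x y]; [constructor 1 | constructor 2 | constructor 3];
  exact: card2_set2.
have not_both x y e : e \in star -> ends2 (phi e) = [set x; y] ->
    ~~ ((x \in ends2 (phi h)) && (y \in ends2 (phi h))).
  move=> eS eE; apply/negP => /andP[xh yh]; move/negP: (outer_image_not_parallel hout eS).
  by rewrite eE (card2_set2 (L2 _) xh yh (loopless_neq L2 eE)).
have adj e a x y : e \in star -> ends1 e = [set v; a] -> ends2 (phi e) = [set x; y] ->
    (x \in ends2 (phi h)) || (y \in ends2 (phi h)) = (v \in ends1 h) || (a \in ends1 h).
  by move=> eS; apply: (dual_adj_set2 L1 L2 phi_bij phi_label); apply: contraNneq hout => ->.
have [x1 x2 x3] : [/\ e1 \in star, e2 \in star & e3 \in star] by rewrite !inE !eqxx ?orbT.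
move: (not_both _ _ _ x1 X1) (not_both _ _ _ x2 X2) (not_both _ _ _ x3 X3).
move: (adj _ _ _ _ x1 E1v X1) (adj _ _ _ _ x2 E2v X2) (adj _ _ _ _ x3 E3v X3).
by case: (v \in ends1 h); case: (p \in _); case: (q \in _); case: (r \in _) => //= <- <- <-.
Qed.

Lemma paw_vertices : [set v; a1; a2; a3] = setT.
Proof.
apply: (connected_closed K1 (_ : v \in _)) => [|h u w uX uh wh]; first by rewrite !inE eqxx.
have [hS|hout] := boolP (h \in star).
  move: hS wh; rewrite !inE => /orP[/orP[]|]/eqP->; rewrite ?E1v ?E2v ?E3v !inE;
  by case/orP=> ->; rewrite ?orbT.
have [vNh pair] := outer_edge_ends hout.
have : [|| a1 \in ends1 h, a2 \in ends1 h | a3 \in ends1 h].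
  by move: uX vNh; rewrite !inE => /orP[/orP[/orP[]|]|]/eqP uE; rewrite -uE uh ?orbT.
by case/pair=> hE; move: wh; rewrite hE !inE => /orP[]->; rewrite ?orbT.
Qed.

Lemma outer_edge_pair h : h \notin star ->
  [\/ ends1 h = [set a1; a2], ends1 h = [set a1; a3] | ends1 h = [set a2; a3]].
Proof.
move=> hout; have [vNh pair] := outer_edge_ends hout; apply: pair.
have /card_gt0P[u uh] : 0 < #|ends1 h| by rewrite L1.
have : u \in [set v; a1; a2; a3] by rewrite paw_vertices inE.
by rewrite !inE => /orP[/orP[/orP[]|]|]/eqP uE; move: uh vNh; rewrite uE => ->; rewrite ?orbT.
Qed.

Lemma outer_edge_cycle h : h \notin star ->
  exists e f, [/\ e \in star, f \in star & is_cycle ends1 [set e; h; f]].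
Proof.
have [E2v' E3v'] : ends1 e2 = [set a2; v] /\ ends1 e3 = [set a3; v].
  by rewrite E2v E3v; split; apply: setUC.
case/outer_edge_pair => hE; [exists e1, e2 | exists e1, e3 | exists e2, e3];
  rewrite !inE !eqxx ?orTb ?orbT; split=> //; apply: (triangle_cycle L1 _ hE); eassumption.
Qed.

Lemma outer_edge_unique h h' : h \notin star -> h' \notin star -> h' = h.
Proof.
move=> hout h'out.
have [e [f [eS fS cyc]]] := outer_edge_cycle hout.
have [e' [f' [_ _ cyc']]] := outer_edge_cycle h'out.
move: (unicyclic_eq U1 cyc' cyc) => /setP/(_ h'); rewrite !inE eqxx orbT.
by case/esym/orP => [/orP[]|] /eqP h'E //; move: h'out; rewrite h'E ?eS ?fS.
Qed.

Lemma star_edge_leaf e : e \in star ->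
  exists2 x, x \in ends1 e & forall g, g \in star -> x \in ends1 g -> g = e.
Proof.
have [a1v a2v a3v] := star_leaves_neq.
have [a21 a31 a32] : [/\ a2 != a1, a3 != a1 & a3 != a2] by rewrite !(eq_sym a3) eq_sym.
rewrite !inE => /orP[/orP[]|]/eqP->; [exists a1 | exists a2 | exists a3];
  rewrite ?E1v ?E2v ?E3v ?inE ?eqxx ?orbT // => g;
  by rewrite !inE => /orP[/orP[]|]/eqP-> //; rewrite ?E1v ?E2v ?E3v set2_memF.
Qed.

Lemma outer_edge_exists : exists h, h \notin star.
Proof.
have [h hout|all_star] := pickP (fun h => h \notin star); first by exists h.
have {}all_star h : h \in star by apply/negbFE/all_star.
have [C [cC _]] := U1; have [/set0Pn[e eC] _ _] := cC.
have [x xe leaf] := star_edge_leaf (all_star e).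
have [g gC /andP[ge xg]] := cycle_other_edge cC eC xe.
by move: ge; rewrite (leaf g (all_star g) xg) eqxx.
Qed.

Lemma paw_image_outer h0 : h0 \notin star -> ends1 h0 = [set a1; a2] ->
  exists2 s, ends2 (phi h0) = [set r; s] & [&& s != p, s != q & s != r].
Proof.
move=> h0out H0; have [va1 va2 _] := star_center_neq.
have [a31 a32] : a3 != a1 /\ a3 != a2 by rewrite !(eq_sym a3).
have [h0e1 h0e3] : h0 != e1 /\ h0 != e3.
  by move: h0out; rewrite !inE !negb_or => /andP[/andP[-> _] ->].
have /norP[pNh0 qNh0] : ~~ ((p \in ends2 (phi h0)) || (q \in ends2 (phi h0))).
  by rewrite (dual_adj_set2 L1 L2 phi_bij phi_label h0e3 E3v X3) H0 !set2_memF.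
have rh0 : r \in ends2 (phi h0).
  move: (dual_adj_set2 L1 L2 phi_bij phi_label h0e1 E1v X1).
  by rewrite (negbTE qNh0) H0 set21 orbT.
have [s sr Es] := card2_other (L2 (phi h0)) rh0.
exists s => //; rewrite sr andbT.
by apply/andP; split; [apply: contraNneq pNh0 | apply: contraNneq qNh0] => <-; rewrite Es set22.
Qed.

Definition paw_vertex_map (s : V2) (x : V1) : V2 :=
  if x == v then r else if x == a1 then q else if x == a2 then p else s.

Lemma paw_vertex_map_star s : [/\ paw_vertex_map s v = r, paw_vertex_map s a1 = q,
  paw_vertex_map s a2 = p & paw_vertex_map s a3 = s].
Proof.
have [a1v a2v a3v] := star_leaves_neq.
have [a21 a31 a32] : [/\ a2 != a1, a3 != a1 & a3 != a2] by rewrite !(eq_sym a3) eq_sym.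
by rewrite /paw_vertex_map !eqxx !ifN.
Qed.

Lemma paw_vertex_map_inj s : [&& s != p, s != q & s != r] -> injective (paw_vertex_map s).
Proof.
case/and3P=> sp sq sr; have [pq qr pr] := triangle_neq.
pose back w := if w == r then v else if w == q then a1 else if w == p then a2 else a3.
apply: (can_inj (g := back)) => x; have [fv fa1 fa2 fa3] := paw_vertex_map_star s.
have : x \in [set v; a1; a2; a3] by rewrite paw_vertices inE.
rewrite !inE => /orP[/orP[/orP[]|]|]/eqP->; rewrite ?fv ?fa1 ?fa2 ?fa3 /back ?eqxx //.
- by rewrite ifN.
- by rewrite !ifN // eq_sym.
- by rewrite !ifN.
Qed.

Lemma paw_iso h0 : h0 \notin star -> ends1 h0 = [set a1; a2] -> graph_iso ends1 ends2.
Proof.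
move=> h0out H0; have [s Es s_new] := paw_image_outer h0out H0.
have [fv fa1 fa2 fa3] := paw_vertex_map_star s.
have [_ _ a3v] := star_leaves_neq.
have [a31 a32] : a3 != a1 /\ a3 != a2 by rewrite !(eq_sym a3).
have [h0e1 h0e2] : h0 != e1 /\ h0 != e2.
  by move: h0out; rewrite !inE !negb_or => /andP[/andP[-> ->] _].
have e31 : e3 != e1 by apply: contraTneq (set22 v a3) => E; rewrite -E3v E E1v set2_memF.
have e32 : e3 != e2 by apply: contraTneq (set22 v a3) => E; rewrite -E3v E E2v set2_memF.
(* Relative to the edge map induced by the vertices, [phi] exchanges the pendant edge [e3]
   with the triangle edge [h0]. *)
exists (paw_vertex_map s), (phi \o tperm e3 h0); split.
- by apply: inj_card_bij (paw_vertex_map_inj s_new) _; rewrite cardV.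
- exact: bij_comp phi_bij (Bijective (permK _) (permKV _)).
move=> e /=; have [|/(outer_edge_unique h0out)->] := boolP (e \in star); last first.
  by rewrite tpermR X3 H0 imset_set2 fa1 fa2 setUC.
rewrite !inE => /orP[/orP[]|]/eqP->.
- by rewrite tpermD // X1 E1v imset_set2 fv fa1 setUC.
- by rewrite tpermD // X2 E2v imset_set2 fv fa2 setUC.
- by rewrite tpermL Es E3v imset_set2 fv fa3.
Qed.

End Paw.

Lemma leaf_neq_of_image e f v a b x : ends1 e = [set v; a] -> ends1 f = [set v; b] ->
  x \in ends2 (phi e) -> x \notin ends2 (phi f) -> a != b.
Proof.
move=> eE fE xe; apply: contraNneq => ab.
by rewrite -(dual_parallel_eq phi_bij phi_label (_ : ends1 e = ends1 f)) // eE fE ab.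
Qed.

Lemma image_triangle e1 e2 e3 v : e1 != e2 -> e2 != e3 -> e1 != e3 ->
  v \in ends1 e1 -> v \in ends1 e2 -> v \in ends1 e3 ->
  ~~ common_end ends2 (phi e1) (phi e2) (phi e3) ->
  exists p q r, [/\ ends2 (phi e1) = [set q; r], ends2 (phi e2) = [set p; r]
                  & ends2 (phi e3) = [set p; q]].
Proof.
move=> e12 e23 e13 v1 v2 v3 no_common.
have meet e f : e != f -> v \in ends1 e -> v \in ends1 f -> edge_adj ends2 (phi e) (phi f).
  by move=> ef ve vf; rewrite (dual_edge_adj L1 L2 phi_bij phi_label ef); apply/edge_adjP; exists v.
have /edge_adjP[r r1 r2] := meet _ _ e12 v1 v2.
have /edge_adjP[q q1 q3] := meet _ _ e13 v1 v3.
have /edge_adjP[p p2 p3] := meet _ _ e23 v2 v3.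
have no_triple x : x \in ends2 (phi e1) -> x \in ends2 (phi e2) -> x \in ends2 (phi e3) -> False.
  by move=> x1 x2 x3; move/common_endP: no_common; apply; exists x.
have r3 : r \notin ends2 (phi e3) by apply/negP; apply: no_triple.
have q2 : q \notin ends2 (phi e2) by apply/negP => q2; apply: (no_triple q).
exists p, q, r; split; apply: card2_set2 => //.
- by apply: contraNneq q2 => ->.
- by apply: contraNneq r3 => <-.
- by apply: contraNneq q2 => <-.
Qed.

Lemma star_to_triangle_iso e1 e2 e3 : e1 != e2 -> e2 != e3 -> e1 != e3 ->
  common_end ends1 e1 e2 e3 -> ~~ common_end ends2 (phi e1) (phi e2) (phi e3) ->
  graph_iso ends1 ends2.
Proof.
move=> e12 e23 e13 /common_endP[v [v1 v2 v3]] /(image_triangle e12 e23 e13 v1 v2 v3).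
case=> p [q [r [X1 X2 X3]]].
have [pq qr pr] := triangle_neq X1 X2 X3.
have [[[a1 _ E1v] [a2 _ E2v]] [a3 _ E3v]] :=
  (card2_other (L1 e1) v1, card2_other (L1 e2) v2, card2_other (L1 e3) v3).
have a12 : a1 != a2.
  by apply: (leaf_neq_of_image E1v E2v (x := q)); rewrite ?X1 ?X2 ?set21 ?set2_memF // eq_sym.
have a13 : a1 != a3.
  by apply: (leaf_neq_of_image E1v E3v (x := r)); rewrite ?X1 ?X3 ?set22 ?set2_memF // eq_sym.
have a23 : a2 != a3.
  by apply: (leaf_neq_of_image E2v E3v (x := r)); rewrite ?X2 ?X3 ?set22 ?set2_memF // eq_sym.
have [h0 h0out] := outer_edge_exists E1v E2v E3v a12 a13 a23.
case: (outer_edge_pair E1v E2v E3v a12 a13 a23 X1 X2 X3 h0out) => h0E.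
- exact: (paw_iso E1v E2v E3v a12 a13 a23 X1 X2 X3 h0out h0E).
- apply: (paw_iso E1v E3v E2v a13 a12 _ (_ : _ = [set r; q]) X3 X2 _ h0E).
  + by rewrite eq_sym.
  + by rewrite X1 setUC.
  + by rewrite set3_swap.
- apply: (paw_iso E2v E3v E1v a23 _ _ (_ : _ = [set r; p]) (_ : _ = [set q; p]) X1 _ h0E).
  + by rewrite eq_sym.
  + by rewrite eq_sym.
  + by rewrite X2 setUC.
  + by rewrite X3 setUC.
  + by rewrite -set3_rot.
Qed.

End StarToTriangle.

Theorem lemma6 (n : nat) (V1 E1 V2 E2 : finType)
    (ends1 : E1 -> {set V1}) (ends2 : E2 -> {set V2}) :
  #|V1| = n -> #|V2| = n ->
  loopless ends1 -> loopless ends2 ->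
  connected_graph ends1 -> connected_graph ends2 ->
  unicyclic ends1 -> unicyclic ends2 ->
  dual_iso ends1 ends2 ->
  graph_iso ends1 ends2.
Proof.
move=> cV1 cV2 L1 L2 K1 K2 U1 U2 [phi [phi_bij phi_label]].
have cardV : #|V1| = #|V2| by rewrite cV1 cV2.
have [V1_le2 | V1_gt2] := leqP #|V1| 2.
  have [C [[/set0Pn[e _] _ _] _]] := U1.
  apply: (iso_two_vertices L1 L2 cardV phi_bij).
  by apply/eqP; rewrite eqn_leq V1_le2 (loopless_card_gt1 L1 e).
pose changes_common_end (t : E1 * E1 * E1) := let: (e, f, g) := t in
  [&& e != f, f != g, e != g &
      common_end ends2 (phi e) (phi f) (phi g) != common_end ends1 e f g].
have [[[e1 e2] e3] /and4P[e12 e23 e13 differ] | none] := pickP changes_common_end; last first.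
  apply: (star_preserving_iso L1 L2 phi_bij phi_label K1 K2 cardV V1_gt2) => e f g ef fg eg.
  by move: (none (e, f, g)); rewrite /= ef fg eg => /negbFE/eqP.
have [c1|nc1] := boolP (common_end ends1 e1 e2 e3).
  apply: (star_to_triangle_iso L1 L2 K1 U1 U2 cardV phi_bij phi_label e12 e23 e13 c1).
  by apply: contra differ => c2; rewrite c1 c2.
have [psi phiK psiK] := phi_bij.
have psi_label e f : dual_label ends1 (psi e) (psi f) = dual_label ends2 e f.
  by rewrite -phi_label !psiK.
apply: graph_iso_sym.
apply: (star_to_triangle_iso L2 L1 K2 U2 U1 (esym cardV) (Bijective psiK phiK) psi_label
  (e1 := phi e1) (e2 := phi e2) (e3 := phi e3)); rewrite ?(bij_eq phi_bij) ?phiK //.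
by apply: contraR differ => c2; rewrite (negbTE nc1) (negbTE c2).
Qed.
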